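(* Let $X$ and $Y$ be bi-atomic random variables. Then $(X,Y)\in\mathrm{IC}$ if and only if either (i) $X$ and $Y$ have the same support, or (ii) $X$ and $Y$ are independent.
   Context: The support of $X$ is $\{x:\mathbb P(x-\epsilon<X\le x+\epsilon)>0\ \forall\epsilon>0\}$; bi-atomic means the support has exactly two points. $\mathcal L^2$ is the set of non-degenerate real random variables with finite variance. $(X,Y)\in\mathrm{IC}_r$ means $\mathrm{Corr}(X,Y)=\mathrm{Corr}(g(X),g(Y))=r$ for all measurable $g$ with $g(X),g(Y)\in\mathcal L^2$, and $\mathrm{IC}=\bigcup_{r\in[-1,1]}\mathrm{IC}_r$. *)

From HB Require Import structures.
From mathcomp Require Import all_boot all_order all_algebra.
From mathcomp Require Import all_classical all_reals all_analysis.
Set Implicit Arguments. Unset Strict Implicit. Unset Printing Implicit Defensive.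
Import Order.TTheory GRing.Theory Num.Theory.
Local Open Scope classical_set_scope.
Local Open Scope ring_scope.

Section defs.
Context {d : measure_display} {T : measurableType d} {R : realType}
  (P : probability T R).

Definition rv_support (X : T -> R) : set R :=
  [set x | forall e : R, 0 < e -> (0 < P [set w | (x - e < X w <= x + e)%R])%E].

Definition biatomic (X : T -> R) : Prop :=
  exists a b : R, a != b /\ rv_support X = [set a; b].

(* L^2: non-degenerate (not a.s. constant) real r.v. with finite variance *)
Definition inL2 (X : T -> R) : Prop :=
  X \in Lfun P 2%:E /\ (forall c : R, P [set w | X w = c] <> 1%E).

Definition corr (X Y : T -> R) : R :=
  fine (covariance P X Y) / Num.sqrt (fine ('V_P[X]) * fine ('V_P[Y])).

Definition IC_r (r : R) (X Y : T -> R) : Prop :=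
  inL2 X /\ inL2 Y /\ corr X Y = r /\
  forall g : R -> R, measurable_fun setT g ->
    inL2 (g \o X) -> inL2 (g \o Y) -> corr (g \o X) (g \o Y) = r.

Definition IC (X Y : T -> R) : Prop :=
  exists r : R, -1 <= r <= 1 /\ IC_r r X Y.

Definition rv_independent (X Y : T -> R) : Prop :=
  forall A B : set R, measurable A -> measurable B ->
    P (X @^-1` A `&` Y @^-1` B) = (P (X @^-1` A) * P (Y @^-1` B))%E.
End defs.

From HB Require Import structures.
From mathcomp Require Import all_boot all_order all_algebra.
From mathcomp Require Import all_classical all_reals all_analysis.
From mathcomp Require Import measurable_realfun lra ring.

(* A variable whose support is {a, b} is almost surely a or b, each with
   positive probability, so every g(X) is a.s. the affine function
   g a + (g b - g a) 1_{X = b} of one indicator.  Hence g(X) is in L^2 iff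
   g a <> g b, and, writing k for the correlation of the indicators
   1_{X = b} and 1_{Y = e} (supp Y = {c, e}),
     corr (g X) (g Y) = sg (g b - g a) * sg (g e - g c) * k.
   If the supports agree the two signs coincide for every g, so all these
   correlations equal corr X Y.  If X and Y are independent then k = 0.
   Conversely, if the supports differ, a measurable g reverses the order of
   one pair and fixes the other, which forces k = -k; and uncorrelated
   indicators of two-valued variables make the variables independent. *)

Set Implicit Arguments. Unset Strict Implicit. Unset Printing Implicit Defensive.
Import Order.TTheory GRing.Theory Num.Theory.
Local Open Scope classical_set_scope.
Local Open Scope ring_scope.

Lemma exists_measurable_update1 (R : realType) (u w : R) :
  exists g : R -> R, [/\ measurable_fun setT g, g u = w & forall x, x != u -> g x = x].
Proof.
exists (fun x => x + \1_[set u] x * (w - u)); split.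
- apply: measurable_funD => //; apply: measurable_funM.
    exact: measurable_indic (measurable_set1 u).
  exact: measurable_cst.
- by rewrite indicE mem_set //= mul1r addrC subrK.
- by move=> x xu; rewrite indicE memNset ?mul0r ?addr0 //=; apply/eqP.
Qed.

Lemma exists_sign_flip (R : realType) (a b c e : R) :
  a != b -> [set a; b] <> [set c; e] ->
  exists g : R -> R, [/\ measurable_fun setT g, g c = c, g e = e &
    Num.sg (g b - g a) = - Num.sg (b - a)].
Proof.
move=> ab neq.
(* moving u to its mirror image through v reverses the order of u and v *)
have flip u v : v != u -> ~ [set c; e] u -> exists g : R -> R,
    [/\ measurable_fun setT g, g c = c, g e = e & g v - g u = u - v].
  move=> vu ncu; have [g [mg gu gfix]] := exists_measurable_update1 u (2 * v - u).
  exists g; rewrite gu !gfix //; first (split => //; ring).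
  - by apply/eqP => eu; apply: ncu; right.
  - by apply/eqP => cu; apply: ncu; left.
have [nca|ncb] : ~ [set c; e] a \/ ~ [set c; e] b.
  apply: contra_notP neq => /not_orP[/contrapT cea /contrapT ceb].
  by move: ab; case: cea ceb => -> [] ->; rewrite ?eqxx // => _; rewrite setUC.
- have [g [mg gc ge gba]] := flip a b ltac:(by rewrite eq_sym) nca.
  by exists g; rewrite gba -opprB sgrN.
- have [g [mg gc ge gab]] := flip b a ab ncb.
  by exists g; rewrite -opprB gab sgrN.
Qed.

Section biatomic_correlation.
Context {d : measure_display} {T : measurableType d} {R : realType}
  (P : probability T R).

Lemma measurable_preimage (f : T -> R) (B : set R) :
  measurable_fun setT f -> measurable B -> measurable (f @^-1` B).
Proof. by move=> mf mB; rewrite -[_ @^-1` _]setTI; exact: mf. Qed.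

Lemma le_measure_ae (S S' : set T) : measurable S -> measurable S' ->
  {ae P, forall w, S w -> S' w} -> (P S <= P S')%E.
Proof.
move=> mS mS' [N [mN N0 SS'N]].
have sub : S `<=` S' `|` N.
  move=> w Sw; have [S'w|nS'w] := pselect (S' w); [by left|right].
  by apply: SS'N => /= /(_ Sw).
apply: (le_trans (le_measure _ _ _ sub)); rewrite ?inE; [exact: mS|exact: measurableU|].
by apply: (le_trans (measureU2 _ mS' mN)); rewrite [X in (_ + X)%E]N0 adde0.
Qed.

Lemma probability_ae1 (S : set T) : measurable S -> {ae P, forall w, S w} -> P S = 1%E.
Proof.
move=> mS SP; apply/eqP; rewrite eq_le probability_le1 //= -(probability_setT P).
by apply: le_measure_ae => //; apply: filterS SP.
Qed.

Lemma expectation_ae_eq (f g : T -> R) :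
  measurable_fun setT f -> measurable_fun setT g ->
  {ae P, forall w, f w = g w} -> ('E_P[f] = 'E_P[g])%E.
Proof.
move=> mf mg fg; rewrite expectation.unlock.
apply: ae_eq_integral => //; [exact/measurable_EFinP|exact/measurable_EFinP|].
by apply: filterS fg => w -> _.
Qed.

Lemma covariance_ae_eq (f f' g g' : T -> R) :
  measurable_fun setT f -> measurable_fun setT f' ->
  measurable_fun setT g -> measurable_fun setT g' ->
  {ae P, forall w, f w = f' w} -> {ae P, forall w, g w = g' w} ->
  covariance P f g = covariance P f' g'.
Proof.
move=> mf mf' mg mg' ff' gg'.
rewrite !covariance.unlock (expectation_ae_eq mf mf' ff') (expectation_ae_eq mg mg' gg').
apply: expectation_ae_eq; try by apply: measurable_funM; apply: measurable_funB.
by apply: filterS2 ff' gg' => w fw gw; rewrite !mulrfctE /= fw gw.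
Qed.

Lemma Lfun2_ae_eq (f g : T -> R) : measurable_fun setT f ->
  {ae P, forall w, f w = g w} -> g \in Lfun P 2%:E -> f \in Lfun P 2%:E.
Proof.
move=> mf fg /andP[]; rewrite !inE /= /finite_norm => mg gfin.
apply/andP; split; rewrite inE //= /finite_norm.
suff -> : Lnorm P 2%:E (EFin \o f) = Lnorm P 2%:E (EFin \o g) by [].
have mpow2 (h : T -> R) : measurable_fun setT h ->
    measurable_fun setT (fun w => (`|h w| `^ 2)%:E).
  move=> mh; apply/measurable_EFinP.
  by apply: (measurableT_comp (measurable_powR _)); exact: measurableT_comp.
rewrite unlock /=; congr (_ `^ _)%E.
apply: ae_eq_integral => //; [exact: mpow2|exact: mpow2|].
by apply: filterS fg => w /= -> _.
Qed.


Lemma Lfun2_Lfun1 (f : T -> R) : f \in Lfun P 2%:E -> f \in Lfun P 1.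
Proof. exact/Lfun_subset12/fin_num_measure. Qed.

Lemma Lfun2_indic (A : set T) : measurable A -> (\1_A : T -> R) \in Lfun P 2%:E.
Proof.
move=> mA; rewrite inE; apply/andP; split; rewrite inE /=; first exact: measurable_indic.
rewrite /finite_norm unlock /= poweR_lty //.
have indic_pow2 x : `|(\1_A x : R)| `^ 2 = \1_A x.
  by rewrite /indic; case: (x \in A); rewrite /= ?normr1 ?powR1 ?normr0 ?powR0.
under eq_integral => x _ do rewrite indic_pow2.
by rewrite integral_indic // setIT (le_lt_trans (probability_le1 _ mA)) // ltry.
Qed.

Lemma covariance_indic (A B : set T) : measurable A -> measurable B ->
  covariance P (\1_A) (\1_B) = (fine (P (A `&` B)) - fine (P A) * fine (P B))%:E.
Proof.
move=> mA mB; have LA := Lfun2_indic mA; have LB := Lfun2_indic mB.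
rewrite covarianceE ?Lfun2_mul_Lfun1 ?Lfun2_Lfun1 //.
have -> : (\1_A * \1_B = \1_(A `&` B) :> (T -> R)) by rewrite indicI.
rewrite !expectation_indic //; last exact: measurableI.
by rewrite EFinB EFinM !fineK //; apply: fin_num_measure => //; apply: measurableI.
Qed.

Lemma variance_indic (A : set T) : measurable A ->
  'V_P[\1_A] = (fine (P A) * (1 - fine (P A)))%:E.
Proof. by move=> mA; rewrite /variance covariance_indic // setIid mulrBr mulr1. Qed.

Lemma measurable_affine_indic (al be : R) (A : set T) : measurable A ->
  measurable_fun setT (fun w => al + \1_A w * be).
Proof.
move=> mA; apply: measurable_funD; first exact: measurable_cst.
by apply: measurable_funM; [exact: measurable_indic|exact: measurable_cst].
Qed.

Lemma Lfun2_affine_indic (al be : R) (A : set T) : measurable A ->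
  (fun w => al + \1_A w * be) \in Lfun P 2%:E.
Proof.
move=> mA; have LbA : (be \o* \1_A)%R \in Lfun P 2%:E.
  by apply: Lfun_scale; rewrite ?ler1n ?Lfun2_indic.
have Lc : (cst al : T -> R) \in Lfun P 2%:E by apply: Lfun_cst.
have -> : (fun w => al + \1_A w * be) = (cst al \+ be \o* \1_A)%R by [].
have L := rpredD Lc LbA; exact: (L (lee1n 2)).
Qed.

Lemma covariance_affine_indic (al be ga de : R) (A B : set T) :
  measurable A -> measurable B ->
  covariance P (fun w => al + \1_A w * be) (fun w => ga + \1_B w * de) =
  ((be * de)%:E * covariance P (\1_A) (\1_B))%E.
Proof.
move=> mA mB; have LA := Lfun2_indic mA; have LB := Lfun2_indic mB.
have LbA : (be \o* \1_A)%R \in Lfun P 2%:E by apply: Lfun_scale; rewrite ?ler1n.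
have LdB : (de \o* \1_B)%R \in Lfun P 2%:E by apply: Lfun_scale; rewrite ?ler1n.
have Lc c : (cst c : T -> R) \in Lfun P 2%:E by apply: Lfun_cst.
rewrite [_ (fun w => _) _](_ : _ = covariance P (cst al \+ be \o* \1_A)%R
  (cst ga \+ de \o* \1_B)%R) //.
rewrite covarianceDl ?Lfun2_affine_indic // covariance_cst_l add0e.
rewrite covarianceDr // covariance_cst_r add0e.
rewrite (covarianceZl _ (Lfun2_Lfun1 LA) (Lfun2_Lfun1 LdB) (Lfun2_mul_Lfun1 LA LdB)).
rewrite (covarianceZr _ (Lfun2_Lfun1 LA) (Lfun2_Lfun1 LB) (Lfun2_mul_Lfun1 LA LB)).
by rewrite EFinM muleA.
Qed.

Lemma corr_affine_indic_ae (U V : T -> R) (al be ga de : R) (A B : set T) :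
  measurable A -> measurable B ->
  measurable_fun setT U -> measurable_fun setT V ->
  {ae P, forall w, U w = al + \1_A w * be} ->
  {ae P, forall w, V w = ga + \1_B w * de} ->
  corr P U V = Num.sg be * Num.sg de * corr P (\1_A) (\1_B).
Proof.
move=> mA mB mU mV UA VB.
have mU' := measurable_affine_indic al be mA.
have mV' := measurable_affine_indic ga de mB.
rewrite /corr /variance (covariance_ae_eq mU mU' mV mV' UA VB).
rewrite (covariance_ae_eq mU mU' mU mU' UA UA) (covariance_ae_eq mV mV' mV mV' VB VB).
rewrite !covariance_affine_indic // !covariance_indic // -!EFinM /=.
set vA := (_ - fine (P A) * fine (P A)).
set vB := (_ - fine (P B) * fine (P B)).
have -> : be * be * vA * (de * de * vB) = (be * de) ^+ 2 * (vA * vB) by ring.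
rewrite -sgrM sqrtrM ?sqr_ge0 // sqrtr_sqr.
set x := be * de; set s := Num.sqrt (vA * vB).
have [->|x0] := eqVneq x 0; first by rewrite sgr0 !mul0r.
have [->|s0] := eqVneq s 0; first by rewrite !mulr0 !invr0 !mulr0.
rewrite {1}(numEsg x); field.
by rewrite normr_eq0 x0 s0.
Qed.

Lemma corr_bound (U V : T -> R) : U \in Lfun P 2%:E -> V \in Lfun P 2%:E ->
  -1 <= corr P U V <= 1.
Proof.
move=> LU LV.
have LNU : (\- U)%R \in Lfun P 2%:E.
  by have : (- U)%R \in Lfun P 2%:E by rewrite rpredN.
have fU := variance_fin_num LU; have fV := variance_fin_num LV.
have le_cov := covariance_le LU LV.
have ge_cov := covariance_le LNU LV.
have LU1 := Lfun2_Lfun1 LU; have LV1 := Lfun2_Lfun1 LV.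
have LUV := Lfun2_mul_Lfun1 LU LV.
have fc := covariance_fin_num LU1 LV1 LUV.
rewrite covarianceNl // varianceN // in ge_cov.
have vU0 : 0 <= fine 'V_P[U] by apply/fine_ge0/variance_ge0.
have vV0 : 0 <= fine 'V_P[V] by apply/fine_ge0/variance_ge0.
move: le_cov ge_cov; rewrite -(fineK fc) -(fineK fU) -(fineK fV) /= -!EFinM !lee_fin.
rewrite /corr sqrtrM //; set s := Num.sqrt _ * Num.sqrt _ => le_cov ge_cov.
have [->|s0] := eqVneq s 0; first by rewrite invr0 mulr0 lerN10 ler01.
have sp : 0 < s by rewrite lt_def s0 mulr_ge0 ?sqrtr_ge0.
by rewrite ler_pdivlMr // ler_pdivrMr // mulN1r mul1r lerNl ge_cov le_cov.
Qed.

Lemma variance_indic_gt0 (A : set T) : measurable A ->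
  (0 < P A)%E -> (0 < P (~` A))%E -> 0 < fine (P A) * (1 - fine (P A)).
Proof.
move=> mA PA PAC; have finA : P A \is a fin_num by apply: fin_num_measure.
rewrite mulr_gt0 //; first by apply: fine_gt0; rewrite PA /= ltey_eq finA.
by move: PAC; rewrite probability_setC // -(fineK finA) -EFinB lte_fin subr_gt0.
Qed.

Lemma corr_indic_eq0 (A B : set T) : measurable A -> measurable B ->
  (0 < P A)%E -> (0 < P (~` A))%E -> (0 < P B)%E -> (0 < P (~` B))%E ->
  corr P (\1_A) (\1_B) = 0 <-> covariance P (\1_A) (\1_B) = 0%E.
Proof.
move=> mA mB PA PAC PB PBC; split; last by rewrite /corr => ->; rewrite mul0r.
have vAB := mulr_gt0 (variance_indic_gt0 mA PA PAC) (variance_indic_gt0 mB PB PBC).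
rewrite /corr !variance_indic // covariance_indic //= => /eqP.
by rewrite mulf_eq0 invr_eq0 sqrtr_eq0 leNgt vAB orbF => /eqP ->.
Qed.

Lemma inL2_affine_indic_ae (U : T -> R) (al be : R) (A : set T) :
  measurable A -> measurable_fun setT U ->
  {ae P, forall w, U w = al + \1_A w * be} ->
  be != 0 -> (0 < P A)%E -> (0 < P (~` A))%E -> inL2 P U.
Proof.
move=> mA mU UA be0 PA PAC.
split; first exact: Lfun2_ae_eq mU UA (Lfun2_affine_indic _ _ mA).
move=> c Uc; have mUc := measurable_preimage mU (measurable_set1 c).
have Uc_ae : {ae P, forall w, U w = c}.
  exists (~` (U @^-1` [set c])); split; first exact: measurableC.
    by rewrite probability_setC // Uc subee.
  by move=> w /=.
have := covariance_ae_eq mU (measurable_cst c) mU (measurable_cst c) Uc_ae Uc_ae.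
have mUA := measurable_affine_indic al be mA.
rewrite covariance_cst_l (covariance_ae_eq mU mUA mU mUA UA UA).
rewrite covariance_affine_indic // covariance_indic // setIid -EFinM => -[].
apply/eqP; rewrite mulf_neq0 ?mulf_neq0 //.
by rewrite -[X in X - _]mulr1 -mulrBr gt_eqF ?variance_indic_gt0.
Qed.

Lemma not_inL2_ae_cst (U : T -> R) (c : R) : measurable_fun setT U ->
  {ae P, forall w, U w = c} -> ~ inL2 P U.
Proof.
move=> mU Uc [_ nondeg]; apply: (nondeg c); apply: probability_ae1 => //.
exact: measurable_preimage mU (measurable_set1 c).
Qed.

Lemma rv_support_ae (X : T -> R) : measurable_fun setT X ->
  {ae P, forall w, rv_support P X (X w)}.
Proof.
(* the complement of the support is covered by the null intervals with
   rational endpoints *)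
move=> mX.
pose I (q : rat * rat) := X @^-1` `]ratr q.1, ratr q.2]%classic.
pose F n := if unpickle n is Some q then if P (I q) == 0%E then I q else set0
  else set0.
have negF n : P.-negligible (F n).
  rewrite /F; case: (unpickle n) => [q|]; last exact: negligible_set0.
  case: ifPn => [/eqP I0|_]; last exact: negligible_set0.
  by apply/negligibleP => //; apply: measurable_preimage => //; exact: measurable_itv.
apply: (negligibleS _ (negligible_bigcup negF)) => w /= nsupp.
have [e e0 e_null] : exists2 e : R, 0 < e &
    P [set w' | X w - e < X w' <= X w + e] = 0%E.
  apply: contra_notP nsupp => nonnull e e0.
  rewrite lt_def measure_ge0 andbT; apply/negP => /eqP e_null.
  by apply: nonnull; exists e.
have [p] := @rat_in_itvoo _ (X w - e) (X w) ltac:(by rewrite ltrBlDr ltrDl).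
rewrite in_itv /= => /andP[ep pX].
have [q] := @rat_in_itvoo _ (X w) (X w + e) ltac:(by rewrite ltrDl).
rewrite in_itv /= => /andP[Xq qe].
exists (pickle (p, q)); first by [].
rewrite /F pickleK.
have -> : P (I (p, q)) = 0%E.
  apply/eqP; rewrite -measure_le0 -e_null; apply: le_measure; rewrite ?inE.
  - by apply: measurable_preimage => //; exact: measurable_itv.
  - rewrite -[X in measurable X]/(X @^-1` `](X w - e), (X w + e)]%classic).
    by apply: measurable_preimage => //; exact: measurable_itv.
  - move=> w'; rewrite /I /= in_itv /= => /andP[pXw' Xw'q].
    by rewrite (lt_trans ep pXw') (le_trans Xw'q (ltW qe)).
by rewrite eqxx /I /= in_itv /= pX (ltW Xq).
Qed.

Lemma support2_ae (X : T -> R) (a b : R) : measurable_fun setT X ->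
  rv_support P X = [set a; b] -> {ae P, forall w, X w = a \/ X w = b}.
Proof. by move=> mX sX; apply: filterS (rv_support_ae mX); rewrite sX. Qed.

Lemma support2_atom_gt0 (X : T -> R) (a b : R) : measurable_fun setT X ->
  a != b -> rv_support P X = [set a; b] -> (0 < P (X @^-1` [set a]))%E.
Proof.
move=> mX ab sX; have e0 : 0 < `|b - a| / 2 by rewrite divr_gt0 ?normr_gt0 ?subr_eq0 1?eq_sym.
have /(_ _ e0) Pnear_a : rv_support P X a by rewrite sX; left.
apply: (lt_le_trans Pnear_a); apply: le_measure_ae.
- rewrite -[X in measurable X]/(X @^-1` `](a - `|b - a| / 2), (a + `|b - a| / 2)]%classic).
  by apply: measurable_preimage => //; exact: measurable_itv.
- exact: measurable_preimage.
- apply: filterS (support2_ae mX sX) => w [Xa|Xb] //= /andP[].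
  rewrite Xb => lo hi; have : `|b - a| <= `|b - a| / 2.
    by rewrite ler_norml; apply/andP; split; lra.
  lra.
Qed.

Lemma support2_atomC_gt0 (X : T -> R) (a b : R) : measurable_fun setT X ->
  a != b -> rv_support P X = [set a; b] -> (0 < P (~` (X @^-1` [set b])))%E.
Proof.
move=> mX ab sX; apply: (lt_le_trans (support2_atom_gt0 mX ab sX)).
have mXb := measurable_preimage mX (measurable_set1 b).
apply: le_measure; rewrite ?inE; [exact: measurable_preimage|exact: measurableC|].
by move=> w /= ->; apply/eqP.
Qed.

Lemma support2_comp_ae (X : T -> R) (a b : R) (g : R -> R) : a != b ->
  {ae P, forall w, X w = a \/ X w = b} ->
  {ae P, forall w, g (X w) = g a + \1_(X @^-1` [set b]) w * (g b - g a)}.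
Proof.
move=> ab; apply: filterS => w [] Xw; rewrite indicE.
- rewrite memNset ?mul0r ?addr0 ?Xw //.
  by rewrite /preimage /= Xw; apply/eqP.
- by rewrite mem_set ?mul1r ?Xw ?(addrC (g a)) ?subrK.
Qed.

Lemma inL2_comp_support2 (X : {RV P >-> R}) (a b : R) (g : R -> R) :
  a != b -> rv_support P X = [set a; b] ->
  measurable_fun setT g -> inL2 P (g \o X) <-> g a != g b.
Proof.
move=> ab sX mg; have mX := measurable_funPT X; have mgX := measurableT_comp mg mX.
have gX_ae := support2_comp_ae g ab (support2_ae mX sX).
split => [gX_L2|gab].
  apply/eqP => gab; apply: (not_inL2_ae_cst (c := g a) mgX _ gX_L2).
  by apply: filterS gX_ae => w /= ->; rewrite gab subrr mulr0 addr0.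
apply: (inL2_affine_indic_ae _ mgX gX_ae).
- exact: measurable_preimage.
- by rewrite subr_eq0 eq_sym.
- by apply: (support2_atom_gt0 (b := a) mX); [rewrite eq_sym|rewrite sX setUC].
- exact: (support2_atomC_gt0 mX ab sX).
Qed.

Lemma independent_of_indic_cov0 (X Y : T -> R) (a b c e : R) :
  measurable_fun setT X -> measurable_fun setT Y -> a != b -> c != e ->
  {ae P, forall w, X w = a \/ X w = b} -> {ae P, forall w, Y w = c \/ Y w = e} ->
  covariance P (\1_(X @^-1` [set b])) (\1_(Y @^-1` [set e])) = 0%E ->
  rv_independent P X Y.
Proof.
move=> mX mY ab ce Xab Yce cov0 A B mA mB.
have mXA := measurable_preimage mX mA; have mYB := measurable_preimage mY mB.
have mXb := measurable_preimage mX (measurable_set1 b).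
have mYe := measurable_preimage mY (measurable_set1 e).
(* 1_{X in A} and 1_{Y in B} are a.s. affine in the two indicators, so their
   covariance is a multiple of cov0 *)
have XA_ae := support2_comp_ae (\1_A) ab Xab.
have YB_ae := support2_comp_ae (\1_B) ce Yce.
have := covariance_ae_eq (measurable_indic mXA) (measurable_affine_indic _ _ mXb)
  (measurable_indic mYB) (measurable_affine_indic _ _ mYe) XA_ae YB_ae.
rewrite covariance_affine_indic // cov0 mule0 covariance_indic // => -[].
move/eqP; rewrite subr_eq0 => /eqP PAB.
have finAB : P (X @^-1` A `&` Y @^-1` B) \is a fin_num.
  by apply: fin_num_measure; apply: measurableI.
by rewrite -(fineK finAB) PAB EFinM !fineK //; apply: fin_num_measure.
Qed.

Lemma IC_of_corr_comp_eq (X Y : T -> R) : inL2 P X -> inL2 P Y ->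
  (forall g, measurable_fun setT g -> inL2 P (g \o X) -> inL2 P (g \o Y) ->
    corr P (g \o X) (g \o Y) = corr P X Y) ->
  IC P X Y.
Proof.
move=> XL2 YL2 corr_eq; exists (corr P X Y).
by split; [exact: corr_bound XL2.1 YL2.1|split].
Qed.

Section two_biatomic.
Variables (X Y : {RV P >-> R}) (a b c e : R).
Hypotheses (ab : a != b) (ce : c != e).
Hypotheses (sX : rv_support P X = [set a; b]) (sY : rv_support P Y = [set c; e]).

Lemma corr_comp_support2 (g : R -> R) : measurable_fun setT g ->
  corr P (g \o X) (g \o Y) = Num.sg (g b - g a) * Num.sg (g e - g c) *
    corr P (\1_(X @^-1` [set b])) (\1_(Y @^-1` [set e])).
Proof.
move=> mg; apply: corr_affine_indic_ae; try exact: measurable_preimage.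
- exact: measurableT_comp.
- exact: measurableT_comp.
- exact/support2_comp_ae/support2_ae.
- exact/support2_comp_ae/support2_ae.
Qed.

Lemma independent_support2P : rv_independent P X Y <->
  corr P (\1_(X @^-1` [set b])) (\1_(Y @^-1` [set e])) = 0.
Proof.
have mXb := measurable_preimage (measurable_funPT X) (measurable_set1 b).
have mYe := measurable_preimage (measurable_funPT Y) (measurable_set1 e).
rewrite corr_indic_eq0 //; last 4 first.
- by apply: (support2_atom_gt0 (b := a)); rewrite // 1?eq_sym // sX setUC.
- exact: support2_atomC_gt0 ab sX.
- by apply: (support2_atom_gt0 (b := c)); rewrite // 1?eq_sym // sY setUC.
- exact: support2_atomC_gt0 ce sY.
split => [XY|]; last first.
  by apply: independent_of_indic_cov0 ab ce (support2_ae _ sX) (support2_ae _ sY).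
rewrite covariance_indic // XY; try exact: measurable_set1.
by rewrite fineM ?subrr //; apply: fin_num_measure; [exact: mXb|exact: mYe].
Qed.

End two_biatomic.

Lemma IC_same_support (X Y : {RV P >-> R}) :
  biatomic P X -> rv_support P X = rv_support P Y -> IC P X Y.
Proof.
move=> [a [b [ab sX]]] sXY; have sY : rv_support P Y = [set a; b] by rewrite -sXY.
have sg_sqr x : x != 0 -> Num.sg x * Num.sg x = 1 by rewrite -expr2 sqr_sg => ->.
apply: IC_of_corr_comp_eq.
- exact: (inL2_comp_support2 ab sX (@measurable_id _ _ setT)).2.
- exact: (inL2_comp_support2 ab sY (@measurable_id _ _ setT)).2.
move=> g mg /(inL2_comp_support2 ab sX mg) gab _.
rewrite -[corr P X Y]/(corr P (id \o X) (id \o Y)).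
by rewrite !(corr_comp_support2 ab ab sX sY) // !sg_sqr // subr_eq0 eq_sym.
Qed.

Lemma IC_independent (X Y : {RV P >-> R}) :
  biatomic P X -> biatomic P Y -> rv_independent P X Y -> IC P X Y.
Proof.
move=> [a [b [ab sX]]] [c [e [ce sY]]] /(independent_support2P ab ce sX sY) k0.
apply: IC_of_corr_comp_eq.
- exact: (inL2_comp_support2 ab sX (@measurable_id _ _ setT)).2.
- exact: (inL2_comp_support2 ce sY (@measurable_id _ _ setT)).2.
move=> g mg _ _.
rewrite -[corr P X Y]/(corr P (id \o X) (id \o Y)).
by rewrite !(corr_comp_support2 ab ce sX sY) // k0 !mulr0.
Qed.

Lemma independent_of_IC (X Y : {RV P >-> R}) : biatomic P X -> biatomic P Y ->
  IC P X Y -> rv_support P X <> rv_support P Y -> rv_independent P X Y.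
Proof.
move=> [a [b [ab sX]]] [c [e [ce sY]]] [r [_ [_ [_ [rXY corr_gXY]]]]].
rewrite sX sY => /(exists_sign_flip ab)[g [mg gc ge sg_flip]].
have gab : g a != g b.
  by rewrite eq_sym -subr_eq0 -sgr_eq0 sg_flip oppr_eq0 sgr_eq0 subr_eq0 eq_sym.
have gce : g c != g e by rewrite gc ge.
have := corr_gXY g mg ((inL2_comp_support2 ab sX mg).2 gab)
  ((inL2_comp_support2 ce sY mg).2 gce).
rewrite -rXY -[corr P X Y]/(corr P (id \o X) (id \o Y)).
rewrite !(corr_comp_support2 ab ce sX sY) // sg_flip gc ge !mulNr.
set s := Num.sg (b - a) * Num.sg (e - c); set k := corr P _ _ => flipped.
have s0 : s != 0 by rewrite mulf_neq0 // sgr_eq0 subr_eq0 eq_sym.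
apply/(independent_support2P ab ce sX sY)/eqP.
have : s * k == 0 by apply/eqP; lra.
by rewrite mulf_eq0 (negbTE s0).
Qed.

End biatomic_correlation.

Theorem proposition5 (d : measure_display) (T : measurableType d) (R : realType)
  (P : probability T R) (X Y : {RV P >-> R}) :
  biatomic P X -> biatomic P Y ->
  (IC P X Y <-> (rv_support P X = rv_support P Y \/ rv_independent P X Y)).
Proof.
move=> bX bY; split => [XY_IC|[sXY|XY_ind]].
- have [sXY|sXY] := pselect (rv_support P X = rv_support P Y); first by left.
  by right; exact: independent_of_IC.
- exact: IC_same_support.
- exact: IC_independent.
Qed.
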